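(* For every real Banach space $X$ with $\dim X\ge 2$ and all $\alpha,\beta>0$, $$DW(X,\alpha,\beta)\ge(\alpha+\beta)\max\{\varepsilon_0(X),1\}.$$
   Context: For $\alpha,\beta>0$, $$DW(X,\alpha,\beta)=\sup\left\{\frac{\alpha\|x\|+\beta\|y\|}{\|x-y\|}\left\|\frac{x}{\|x\|}-\frac{y}{\|y\|}\right\|: x,y\in X\setminus\{0\},\ x\neq y\right\}.$$ The modulus of convexity is $\delta_X(\varepsilon)=\inf\{1-\|\tfrac12(x+y)\|: x,y\in S_X,\ \|x-y\|\ge\varepsilon\}$ for $\varepsilon\in[0,2]$, where $S_X$ is the unit sphere, and the characteristic of convexity is $\varepsilon_0(X)=\sup\{\varepsilon\in[0,2]:\delta_X(\varepsilon)=0\}$. *)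

From HB Require Import structures.
From mathcomp Require Import all_boot all_order all_algebra.
From mathcomp Require Import all_classical all_reals all_analysis.
Set Implicit Arguments. Unset Strict Implicit. Unset Printing Implicit Defensive.
Import Order.TTheory GRing.Theory Num.Theory.
Import numFieldNormedType.Exports.
Local Open Scope classical_set_scope.
Local Open Scope ring_scope.

Definition DW (R : realType) (X : normedModType R) (alpha beta : R) : \bar R :=
  ereal_sup [set r : \bar R | exists x y : X, [/\ x != 0, y != 0, x != y &
       r = ((alpha * `|x| + beta * `|y|) / `|x - y|
            * `| (`|x|^-1 *: x) - (`|y|^-1 *: y) |)%:E]].

Definition modconv (R : realType) (X : normedModType R) (eps : R) : \bar R :=
  ereal_inf [set r : \bar R | exists x y : X, [/\ `|x| = 1, `|y| = 1, eps <= `|x - y| &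
       r = (1 - `|2^-1 *: (x + y)|)%:E]].

Definition char_conv (R : realType) (X : normedModType R) : \bar R :=
  ereal_sup [set r : \bar R | exists eps : R, [/\ 0 <= eps <= 2, modconv X eps = 0%E & r = eps%:E]].

Definition dim_ge2 (R : realType) (X : normedModType R) : Prop :=
  exists x y : X, forall a b : R, a *: x + b *: y = 0 -> a = 0 /\ b = 0.

From HB Require Import structures.
From mathcomp Require Import all_boot all_order all_algebra.
From mathcomp Require Import all_classical all_reals all_analysis.
From mathcomp Require Import ring lra.
Import Order.TTheory GRing.Theory Num.Theory.
Import numFieldNormedType.Exports.
Local Open Scope ring_scope.

(* The bound [alpha + beta] comes from an antipodal pair [(x, -x)].  If
   [delta_X(eps) = 0], there are unit vectors [x], [y] with [eps <= |x - y|]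
   whose midpoint has norm almost 1.  Then [a = (1 - h) x + h y] and
   [b = (1 - h) x] satisfy [|a - b| = h] and [|a| >= 1 - h^2], so
   [|a/|a| - b/|b|| >= h |x - y| - h^2] and the quotient of [(a, b)] is at least
   [(alpha + beta) (1 - h) (eps - h)]; let [h] tend to 0. *)

Section DaoWangQuotient.
Context {R : realType} {X : normedModType R}.

Definition dw_quot (alpha beta : R) (x y : X) : R :=
  (alpha * `|x| + beta * `|y|) / `|x - y| * `| `|x|^-1 *: x - `|y|^-1 *: y |.

Lemma dw_quot_le_DW alpha beta {x y : X} : x != 0 -> y != 0 -> x != y ->
  ((dw_quot alpha beta x y)%:E <= DW X alpha beta)%E.
Proof. by move=> x0 y0 xy; apply: ereal_sup_ubound; exists x, y; split. Qed.

Lemma dw_quot_oppr alpha beta {x : X} : x != 0 ->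
  dw_quot alpha beta x (- x) = alpha + beta.
Proof.
move=> x0; have nx0 : `|x| != 0 by rewrite normr_eq0.
rewrite /dw_quot normrN scalerN !opprK -!mulr2n !normrMn normrZ.
rewrite ger0_norm ?invr_ge0 // mulVf // !mulr2n.
by field; rewrite -mulr2n mulrn_eq0 negb_or.
Qed.

Lemma DW_ge_addr alpha beta {x : X} : x != 0 ->
  ((alpha + beta)%:E <= DW X alpha beta)%E.
Proof.
move=> x0; rewrite -(dw_quot_oppr alpha beta x0).
apply: dw_quot_le_DW; rewrite ?oppr_eq0 //.
by rewrite -subr_eq0 opprK -mulr2n -scaler_nat scaler_eq0 pnatr_eq0 negb_or.
Qed.

Lemma normr_sub_normalize {v : X} : v != 0 -> `|v - `|v|^-1 *: v| = `| `|v| - 1|.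
Proof.
move=> v0; rewrite -{1}[v]scale1r -scalerBl normrZ -[X in _ * X]normr_id -normrM.
by rewrite mulrBl mul1r mulVf ?normr_eq0.
Qed.

End DaoWangQuotient.

Section FlatChord.
Context {R : realType} {X : normedModType R} {x y : X} {h : R}.
Hypotheses (nx : `|x| = 1) (ny : `|y| = 1) (h_gt0 : 0 < h) (h_le : h <= 2^-1).

Let a := (1 - h) *: x + h *: y.
Let b := (1 - h) *: x.

Let h_lt1 : h < 1.
Proof. by apply: le_lt_trans h_le _; rewrite invf_lt1 ?ltr1n. Qed.

Lemma norm_shift_le1 : `|a| <= 1.
Proof.
apply: le_trans (ler_normD _ _) _.
by rewrite !normrZ nx ny !mulr1 (gtr0_norm h_gt0) ger0_norm ?subrK // subr_ge0 (ltW h_lt1).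
Qed.

Lemma norm_shift_ge : 1 - `|2^-1 *: (x + y)| <= h ^+ 2 / 2 -> 1 - h ^+ 2 <= `|a|.
Proof.
have h2 : 2 * h <= 1.
  by have := h_le; rewrite -(ler_pM2l (ltr0n R 2)) mulfV ?pnatr_eq0.
set m := 2^-1 *: (x + y) => mid.
have decomp : (2 * (1 - h)) *: m = a + (1 - 2 * h) *: y.
  rewrite scalerA mulrAC mulfV ?pnatr_eq0 // mul1r scalerDr /a -addrA -scalerDl.
  by congr (_ + _ *: _); lra.
clearbody m; have c_ge0 : 0 <= 1 - h by lra.
have d_ge0 : 0 <= 1 - 2 * h by lra.
have := ler_normD a ((1 - 2 * h) *: y).
rewrite -decomp !normrZ ny mulr1 normr_nat (ger0_norm c_ge0) (ger0_norm d_ge0).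
have : 0 <= (1 - h) * (`|m| - (1 - h ^+ 2 / 2)) by rewrite mulr_ge0 //; lra.
have : 0 <= h ^+ 3 by rewrite exprn_ge0 // (ltW h_gt0).
nra.
Qed.

Lemma DW_ge_flat_chord alpha beta : 0 <= alpha -> 0 <= beta -> h <= `|x - y| ->
  1 - `|2^-1 *: (x + y)| <= h ^+ 2 / 2 ->
  (((alpha + beta) * (1 - h) * (`|x - y| - h))%:E <= DW X alpha beta)%E.
Proof.
move=> a_ge0 b_ge0 h_le_xy mid.
have a_ge_sq := norm_shift_ge mid; have a_le1 := norm_shift_le1.
have a_ge : 1 - h <= `|a|.
  by apply: le_trans a_ge_sq; rewrite lerD2l lerN2 expr2 ler_piMr ?(ltW h_gt0) ?(ltW h_lt1).
have a_gt0 : 0 < `|a| by have := h_lt1; lra.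
have nb : `|b| = 1 - h by rewrite normrZ nx mulr1 ger0_norm // subr_ge0 (ltW h_lt1).
have ab : a - b = h *: y by rewrite /a /b addrAC subrr add0r.
have nab : `|a - b| = h by rewrite ab normrZ ny mulr1 gtr0_norm.
have bx : `|b|^-1 *: b = x by rewrite nb scalerA mulVf ?scale1r // subr_eq0 gt_eqF.
have ax : `|a - x| = h * `|x - y|.
  have -> : a - x = h *: (y - x).
    by rewrite /a scalerBl scale1r scalerBr addrAC [x - _]addrC addrK addrC.
  by rewrite normrZ gtr0_norm // distrC.
have angle : `|x - y| - h <= `| `|a|^-1 *: a - x| / h.
  rewrite ler_pdivlMr //; have := ler_distD (`|a|^-1 *: a) a x.
  by rewrite ax normr_sub_normalize -?normr_gt0 // ler0_norm ?subr_le0 //; nra.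
have weights : (alpha + beta) * (1 - h) <= alpha * `|a| + beta * `|b|.
  by rewrite nb mulrDl lerD2r ler_wpM2l.
have a_neq0 : a != 0 by rewrite -normr_gt0.
have b_neq0 : b != 0 by rewrite -normr_gt0 nb subr_gt0 h_lt1.
have ab_neq : a != b by rewrite -subr_eq0 -normr_gt0 nab.
apply: le_trans (dw_quot_le_DW alpha beta a_neq0 b_neq0 ab_neq); rewrite lee_fin.
rewrite /dw_quot bx nab [in leRHS]mulrAC -[in leRHS]mulrA.
by apply: ler_pM => //; [apply: mulr_ge0; have := h_lt1 | ]; lra.
Qed.

End FlatChord.

Lemma DW_ge_modconv0 (R : realType) (X : normedModType R) alpha beta eps :
  0 < alpha -> 0 < beta -> 1 <= eps <= 2 -> modconv X eps = 0%E ->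
  (((alpha + beta) * eps)%:E <= DW X alpha beta)%E.
Proof.
move=> a_gt0 b_gt0 /andP[eps_ge1 eps_le2] flat; apply/lee_addgt0Pr => g g_gt0.
have ab_gt0 : 0 < alpha + beta by rewrite addr_gt0.
set h := Num.min 2^-1 (g / (3 * (alpha + beta))).
have h_le : h <= 2^-1 by rewrite ge_min lexx.
have h_le_g : 3 * (alpha + beta) * h <= g.
  by rewrite mulrC -ler_pdivlMr ?mulr_gt0 // ge_min lexx orbT.
have h_gt0 : 0 < h by rewrite lt_min invr_gt0 ltr0n divr_gt0 ?mulr_gt0.
have half_lt1 : 2^-1 < 1 :> R by rewrite invf_lt1 ?ltr1n.
have : (0 < (h ^+ 2 / 2)%:E)%E by rewrite lte_fin divr_gt0 ?exprn_gt0.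
rewrite -flat => /ereal_inf_lt[_ [x [y [nx ny eps_le ->]]]]; rewrite lte_fin => mid.
have h_le_xy : h <= `|x - y|.
  by apply: le_trans eps_le; apply: le_trans eps_ge1; exact: le_trans h_le (ltW half_lt1).
have := DW_ge_flat_chord nx ny h_gt0 h_le alpha beta (ltW a_gt0) (ltW b_gt0) h_le_xy (ltW mid).
move=> /(leeD2r g%:E); apply: le_trans; rewrite -EFinD lee_fin.
have : (1 - h) * (eps - h) <= (1 - h) * (`|x - y| - h) by rewrite ler_pM2l ?lerD2r; lra.
nra.
Qed.

Lemma char_conv_le_DW {R : realType} {X : normedModType R} alpha beta {x : X} :
  x != 0 -> 0 < alpha -> 0 < beta ->
  ((alpha + beta)%:E * char_conv X <= DW X alpha beta)%E.
Proof.
move=> x0 a_gt0 b_gt0; have ab_gt0 : 0 < alpha + beta by rewrite addr_gt0.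
suff : (char_conv X <= (alpha + beta)^-1%:E * DW X alpha beta)%E.
  move=> /(lee_wpmul2l (ltW ab_gt0 : (0 <= (alpha + beta)%:E)%E)).
  by rewrite muleA -EFinM mulfV ?lt0r_neq0 // mul1e.
apply: ge_ereal_sup => _ [eps [/andP[eps_ge0 eps_le2] flat ->]].
rewrite -[eps](mulKf (lt0r_neq0 ab_gt0)) EFinM lee_wpmul2l //.
  by rewrite lee_fin invr_ge0 (ltW ab_gt0).
have [eps_le1|eps_gt1] := lerP eps 1.
  apply: le_trans (DW_ge_addr alpha beta x0); rewrite lee_fin.
  by rewrite ler_piMr // (ltW ab_gt0).
by apply: DW_ge_modconv0 => //; rewrite eps_le2 andbT (ltW eps_gt1).
Qed.

Theorem theorem1 (R : realType) (X : completeNormedModType R) (alpha beta : R) :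
  dim_ge2 X -> 0 < alpha -> 0 < beta ->
  ((alpha + beta)%:E * maxe (char_conv X) 1%E <= DW X alpha beta)%E.
Proof.
move=> [x [y indep]] a_gt0 b_gt0.
have x0 : x != 0.
  apply: contra_neq (@oner_neq0 R) => x0.
  by case: (indep 1 0); rewrite ?x0 ?scaler0 ?scale0r ?addr0.
rewrite maxe_pMr //; last by rewrite lee_fin; apply/ltW/addr_gt0.
by rewrite ge_max mule1 (char_conv_le_DW _ _ x0) // (DW_ge_addr _ _ x0).
Qed.
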